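(* Let $\Sigma$ be a finite alphabet, $b\in\Sigma$, $\Gamma=\Sigma\setminus\{b\}$, $L\subseteq\Gamma^+$, and let $\psi$ be a $\mathsf{BE}$ formula over $\Gamma$ such that $L_{act}(\psi)=L$. Then there are $\mathsf{BE}$ formulas (over $\Sigma$) defining, under the action-based semantics, the languages $bL$, $\Sigma^*bL$, $\Sigma^*b(L+\varepsilon)$, $Lb$, $Lb\Sigma^*$, $(L+\varepsilon)b\Sigma^*$, and $bLb$.
   Context: $\Sigma^*$ ($\Sigma^+$) denotes the set of (non-empty) finite words over $\Sigma$, $\varepsilon$ the empty word, concatenation of languages is written by juxtaposition and $L+\varepsilon$ denotes $L\cup\{\varepsilon\}$. For $w=w(0)\cdots w(n)$, $\mathrm{Pref}(w)=\{w(0)\cdots w(i)\mid0\le i\le n-1\}$ and $\mathrm{Suff}(w)=\{w(i)\cdots w(n)\mid1\le i\le n\}$. $\mathsf{BE}$ formulas over an alphabet $\Delta$: $\psi::=a\mid\neg\psi\mid\psi\wedge\psi\mid\langle B\rangle\psi\mid\langle E\rangle\psi$ with $a\in\Delta$; each denotes a language $L_{act}(\psi)\subseteq\Delta^+$: $L_{act}(a)=a^+$, $L_{act}(\neg\psi)=\Delta^+\setminus L_{act}(\psi)$, $L_{act}(\psi_1\wedge\psi_2)=L_{act}(\psi_1)\cap L_{act}(\psi_2)$, $L_{act}(\langle B\rangle\psi)=\{w\in\Delta^+\mid\mathrm{Pref}(w)\cap L_{act}(\psi)\neq\emptyset\}$, $L_{act}(\langle E\rangle\psi)=\{w\in\Delta^+\mid\mathrm{Suff}(w)\cap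 L_{act}(\psi)\neq\emptyset\}$. A formula over $\Gamma\subseteq\Sigma$ is also regarded as a formula over $\Sigma$ when the alphabet is $\Sigma$; a formula $\varphi$ over $\Sigma$ defines a language $M$ if $L_{act}(\varphi)=M$ with $\Delta=\Sigma$. *)

From mathcomp Require Import all_boot.
Set Implicit Arguments. Unset Strict Implicit. Unset Printing Implicit Defensive.

Inductive BEform (T : Type) : Type :=
| BAtom of T
| BNeg of BEform T
| BAnd of BEform T & BEform T
| BB of BEform T
| BE of BEform T.

Fixpoint atoms_in (T : Type) (D : pred T) (f : BEform T) : Prop :=
  match f with
  | BAtom a => D a
  | BNeg p => atoms_in D p
  | BAnd p q => atoms_in D p /\ atoms_in D q
  | BB p => atoms_in D p
  | BE p => atoms_in D p
  end.

Definition nonempty_over (T : eqType) (D : pred T) (w : seq T) : Prop :=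
  w <> [::] /\ all D w.

(* Action-based semantics L_act with respect to the alphabet Delta = D.
   Pref(w) = proper non-empty prefixes take i w (0<i<|w|),
   Suff(w) = proper non-empty suffixes drop i w (0<i<|w|). *)
Fixpoint Lact (T : eqType) (D : pred T) (f : BEform T) (w : seq T) : Prop :=
  match f with
  | BAtom a => nonempty_over D w /\ all (pred1 a) w
  | BNeg p => nonempty_over D w /\ ~ Lact D p w
  | BAnd p q => Lact D p w /\ Lact D q w
  | BB p => nonempty_over D w /\
            exists i, 0 < i < size w /\ Lact D p (take i w)
  | BE p => nonempty_over D w /\
            exists i, 0 < i < size w /\ Lact D p (drop i w)
  end.

Definition defines (Sigma : finType) (phi : BEform Sigma) (M : seq Sigma -> Prop) :=
  forall w, Lact predT phi w <-> M w.

From mathcomp Require Import all_boot zify.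
From Stdlib Require Import Classical.

Set Implicit Arguments.
Unset Strict Implicit.
Unset Printing Implicit Defensive.

(* Since no word of L contains b, psi /\ "b does not occur" defines L over
   Sigma: on words avoiding b the semantics relative to Gamma and to Sigma agree.
   Prefixing a language by b is a translation of formulas: it commutes with /\
   and <B>, replaces <E> by <E><E> (the proper suffixes of v are the suffixes of
   b v obtained by dropping at least two letters), and guards negations and atoms
   by "b followed by a non-empty word".  Appending b is the mirror image of
   prepending it, obtained by swapping <B> and <E>; finally Sigma^* X and
   X Sigma^* are defined by X \/ <E> X and X \/ <B> X. *)

Section Semantics.
Variable T : eqType.
Implicit Types (D : pred T) (f g p q delta psi : BEform T) (a : T) (s u v w : seq T).
Implicit Types (M N L : seq T -> Prop).

Lemma nonempty_overT w : nonempty_over predT w <-> w <> [::].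
Proof. by rewrite /nonempty_over all_predT; split=> [[]|]. Qed.

Lemma Lact_nonempty_over D f w : Lact D f w -> nonempty_over D w.
Proof. by elim: f w => [a|p _|p IHp q _|p _|p _] w /= => [[]|[]|[/IHp]|[]|[]]. Qed.

Lemma nonempty_over_take D i w :
  0 < i -> nonempty_over D w -> nonempty_over D (take i w).
Proof.
case: i => // i _ [w0 Dw]; split; first by case: w w0 {Dw}.
by move: Dw; rewrite -{1}(cat_take_drop i.+1 w) all_cat => /andP[].
Qed.

Lemma nonempty_over_drop D i w :
  i < size w -> nonempty_over D w -> nonempty_over D (drop i w).
Proof.
move=> iw [_ Dw]; split; first by move/(congr1 size); rewrite size_drop /=; lia.
by move: Dw; rewrite -{1}(cat_take_drop i w) all_cat => /andP[].
Qed.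

Lemma Lact_restrict D f w : nonempty_over D w -> Lact D f w <-> Lact predT f w.
Proof.
elim: f w => [a|p IH|p IHp q IHq|p IH|p IH] w Dw /=;
  have wT : nonempty_over predT w by case: Dw => ? _; exact/nonempty_overT.
- by split=> -[_ ?]; split.
- by rewrite IH //; split=> -[_ ?]; split.
- by rewrite IHp // IHq.
- split=> -[_ [i [/andP[i0 iw] H]]]; split=> //; exists i; rewrite i0 iw.
  + by rewrite -IH //; exact: nonempty_over_take.
  + by rewrite IH //; exact: nonempty_over_take.
- split=> -[_ [i [/andP[i0 iw] H]]]; split=> //; exists i; rewrite i0 iw.
  + by rewrite -IH //; exact: nonempty_over_drop.
  + by rewrite IH //; exact: nonempty_over_drop.
Qed.

(* [defines] for letters in an arbitrary eqType: [defines phi M] unfolds to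
   [denotes phi M]. *)
Definition denotes f M := forall w, Lact predT f w <-> M w.

Lemma denotes_ext f M N :
  denotes f M -> (forall w, M w <-> N w) -> denotes f N.
Proof. by move=> fM MN w; rewrite fM. Qed.

Lemma Lact_denotes f : denotes f (Lact predT f).
Proof. by []. Qed.

Lemma BAtom_denotes a : denotes (BAtom a) (fun w => w <> [::] /\ all (pred1 a) w).
Proof. by move=> w /=; rewrite nonempty_overT. Qed.

Lemma BNeg_denotes f M : denotes f M -> denotes (BNeg f) (fun w => w <> [::] /\ ~ M w).
Proof. by move=> fM w /=; rewrite nonempty_overT fM. Qed.

Lemma BAnd_denotes p q M N :
  denotes p M -> denotes q N -> denotes (BAnd p q) (fun w => M w /\ N w).
Proof. by move=> pM qN w /=; rewrite pM qN. Qed.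

Lemma BB_denotes f M :
  denotes f M -> denotes (BB f) (fun w => exists s u, [/\ M s, u <> [::] & w = s ++ u]).
Proof.
move=> fM w /=; rewrite nonempty_overT; split.
  move=> [_ [i [/andP[_ iw] /fM H]]]; exists (take i w), (drop i w); split.
  - exact: H.
  - by move/(congr1 size); rewrite size_drop /=; lia.
  - by rewrite cat_take_drop.
move=> [s [u [/fM H u0 ->]]]; have /nonempty_overT s0 := Lact_nonempty_over H.
split; first by case: s s0 {H}.
exists (size s); rewrite take_size_cat // size_cat; split=> //.
by case: s s0 {H}; case: u u0 => //= *; lia.
Qed.

Lemma BE_denotes f M :
  denotes f M -> denotes (BE f) (fun w => exists u s, [/\ u <> [::], M s & w = u ++ s]).
Proof.
move=> fM w /=; rewrite nonempty_overT; split.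
  move=> [w0 [i [/andP[i0 _] /fM H]]]; exists (take i w), (drop i w); split.
  - by case: i i0 H => // i _ _; case: w w0.
  - exact: H.
  - by rewrite cat_take_drop.
move=> [u [s [u0 /fM H ->]]]; have /nonempty_overT s0 := Lact_nonempty_over H.
split; first by case: u u0 {H}.
exists (size u); rewrite drop_size_cat // size_cat; split=> //.
by case: s s0 {H}; case: u u0 => //= *; lia.
Qed.

Definition BOr p q : BEform T := BNeg (BAnd (BNeg p) (BNeg q)).

Lemma Lact_BOr D p q w : Lact D (BOr p q) w <-> Lact D p w \/ Lact D q w.
Proof.
split=> [[Dw H]|H].
  by apply: NNPP => /not_or_and[np nq]; apply: H; split; split.
by split=> [|[[_ np] [_ nq]]]; [case: H => /Lact_nonempty_over | tauto].
Qed.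

Lemma BOr_denotes p q M N :
  denotes p M -> denotes q N -> denotes (BOr p q) (fun w => M w \/ N w).
Proof. by move=> pM qN w; rewrite Lact_BOr pM qN. Qed.

Definition Bsingleton a : BEform T := BAnd (BAtom a) (BNeg (BB (BAtom a))).

Lemma Bsingleton_denotes a : denotes (Bsingleton a) (fun w => w = [:: a]).
Proof.
move=> w /=; rewrite nonempty_overT; split.
  move=> [[w0 aw] [_ noBB]]; case: w w0 aw noBB => [|x [|y s]] // _ /=.
    by rewrite andbT => /eqP-> _.
  move=> /and3P[/eqP-> /eqP-> _] []; split=> //.
  by exists 1; rewrite /= eqxx.
move=> ->; split; first by rewrite /= eqxx.
by split=> // -[_ [[|[|i]] []]].
Qed.

Definition Bprefix p : BEform T := BOr p (BB p).

Lemma Bprefix_denotes p M :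
  denotes p M -> denotes (Bprefix p) (fun w => exists s u, M s /\ w = s ++ u).
Proof.
move=> pM w; rewrite (BOr_denotes pM (BB_denotes pM)); split.
  by case=> [Mw|[s [u [Ms _ ->]]]]; [exists w, [::]; rewrite cats0 | exists s, u].
move=> [s [[|x u] [Ms ->]]]; first by left; rewrite cats0.
by right; exists s, (x :: u).
Qed.

Definition Bsuffix p : BEform T := BOr p (BE p).

Lemma Bsuffix_denotes p M :
  denotes p M -> denotes (Bsuffix p) (fun w => exists u s, M s /\ w = u ++ s).
Proof.
move=> pM w; rewrite (BOr_denotes pM (BE_denotes pM)); split.
  by case=> [Mw|[u [s [_ Ms ->]]]]; [exists [::], w | exists u, s].
move=> [[|x u] [s [Ms ->]]]; first by left.
by right; exists (x :: u), s.
Qed.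

Definition Bavoid a : BEform T := BNeg (Bsuffix (Bprefix (Bsingleton a))).

Lemma Bavoid_denotes a : denotes (Bavoid a) (nonempty_over (fun x => x != a)).
Proof.
apply: denotes_ext
  (BNeg_denotes (Bsuffix_denotes (Bprefix_denotes (Bsingleton_denotes a)))) _ => w.
have -> : (exists u s, (exists s' v, s' = [:: a] /\ s = s' ++ v) /\ w = u ++ s)
          <-> a \in w.
  split=> [[u [_ [[_ [v [-> ->]]] ->]]]|/splitPr[u v]].
    by rewrite mem_cat inE eqxx orbT.
  by exists u, (a :: v); split=> //; exists [:: a], v.
rewrite /nonempty_over; split=> [[w0 aw]|[w0 /allP aw]]; split=> //.
  by apply/allP=> x xw; apply/eqP=> xa; apply: aw; rewrite -xa.
by move/aw; rewrite eqxx.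
Qed.

Lemma BAnd_relativize_denotes D delta psi L :
  denotes delta (nonempty_over D) -> (forall w, L w -> nonempty_over D w) ->
  (forall w, Lact D psi w <-> L w) -> denotes (BAnd psi delta) L.
Proof.
move=> deltaD LD psiL; apply: denotes_ext (BAnd_denotes (Lact_denotes psi) deltaD) _ => w.
split=> [[psiw Dw]|Lw]; first by apply/psiL; rewrite Lact_restrict.
by have Dw := LD w Lw; rewrite -(Lact_restrict _ Dw) psiL.
Qed.

Definition Bcons a : BEform T := BB (Bsingleton a).

Lemma Bcons_denotes a : denotes (Bcons a) (fun w => exists2 v, v <> [::] & w = a :: v).
Proof.
apply: denotes_ext (BB_denotes (Bsingleton_denotes a)) _ => w.
by split=> [[_ [v [-> v0 ->]]]|[v v0 ->]]; [exists v | exists [:: a], v].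
Qed.

Fixpoint Bprepend a f : BEform T :=
  match f with
  | BAtom c => BAnd (Bcons a) (BNeg (BE (BNeg (BAtom c))))
  | BNeg p => BAnd (Bcons a) (BNeg (Bprepend a p))
  | BAnd p q => BAnd (Bprepend a p) (Bprepend a q)
  | BB p => BB (Bprepend a p)
  | BE p => BAnd (Bcons a) (BE (BE p))
  end.

Lemma Lact_Bprepend a f :
  denotes (Bprepend a f) (fun w => exists v, Lact predT f v /\ w = a :: v).
Proof.
elim: f => [c|p IH|p IHp q IHq|p IH|p IH] /=.
- apply: denotes_ext (BAnd_denotes (Bcons_denotes a)
    (BNeg_denotes (BE_denotes (BNeg_denotes (BAtom_denotes c))))) _ => w.
  split=> [[[v v0 ->] [_ nE]]|[v [[/nonempty_overT v0 cv] ->]]].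
    exists v; split=> //; split; first exact/nonempty_overT.
    case cv: (all (pred1 c) v) => //; case: nE.
    by exists [:: a], v; split=> //; split=> // -[_]; rewrite cv.
  split; first by exists v.
  split=> // -[u [s [u0 [s0 ncs] e]]]; apply: ncs; split=> //.
  case: u u0 e => // x u _ [_ ev].
  by move: cv; rewrite ev all_cat => /andP[].
- apply: denotes_ext (BAnd_denotes (Bcons_denotes a) (BNeg_denotes IH)) _ => w.
  split=> [[[v v0 ->] [_ nP]]|[v [[/nonempty_overT v0 np] ->]]].
    exists v; split=> //; split; first exact/nonempty_overT.
    by move=> pv; apply: nP; exists v.
  by split; [exists v | split=> // -[v' [pv' [e]]]; apply: np; rewrite e].
- apply: denotes_ext (BAnd_denotes IHp IHq) _ => w.
  split=> [[[v [pv ->]] [v' [qv [e]]]]|[v [[pv qv] ->]]].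
    by move: qv; rewrite -e => qv; exists v.
  by split; exists v.
- have bbP := BB_denotes (Lact_denotes p).
  apply: denotes_ext (BB_denotes IH) _ => w.
  split=> [[_ [u [[v [pv ->]] u0 ->]]]|[_ [/bbP[s [u [ps u0 ->]]] ->]]].
    by exists (v ++ u); split=> //; apply/bbP; exists v, u.
  by exists (a :: s), u; split=> //; exists s.
- have beP := BE_denotes (Lact_denotes p).
  apply: denotes_ext (BAnd_denotes (Bcons_denotes a)
    (BE_denotes (BE_denotes (Lact_denotes p)))) _ => w.
  split=> [[[v _ ->] [u1 [_ [u1_0 [u2 [s [u2_0 ps ->]]] e]]]]|].
    case: u1 u1_0 e => // x u1 _ [_ ->].
    exists (u1 ++ u2 ++ s); split=> //; apply/beP; exists (u1 ++ u2), s.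
    by rewrite catA; split=> //; case: u1; case: u2 u2_0.
  move=> [_ [/beP[u [s [u0 ps ->]]] ->]]; split.
    by exists (u ++ s); case: u u0.
  by exists [:: a], (u ++ s); split=> //; exists u, s.
Qed.

Lemma Bprepend_denotes a f M :
  denotes f M -> denotes (Bprepend a f) (fun w => exists v, M v /\ w = a :: v).
Proof.
move=> fM; apply: denotes_ext (Lact_Bprepend a f) _ => w.
by split=> -[v [/fM Mv ->]]; exists v; split=> //; apply/fM.
Qed.

Fixpoint BEmirror f : BEform T :=
  match f with
  | BAtom c => BAtom c
  | BNeg p => BNeg (BEmirror p)
  | BAnd p q => BAnd (BEmirror p) (BEmirror q)
  | BB p => BE (BEmirror p)
  | BE p => BB (BEmirror p)
  end.

Lemma nonempty_over_rev D w : nonempty_over D (rev w) <-> nonempty_over D w.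
Proof.
rewrite /nonempty_over all_rev; split=> -[w0 Dw]; split=> // w_nil; apply: w0.
  by rewrite w_nil.
by rewrite -(revK w) w_nil.
Qed.

Lemma Lact_BEmirror D f w : Lact D (BEmirror f) w <-> Lact D f (rev w).
Proof.
elim: f w => [c|p IH|p IHp q IHq|p IH|p IH] w /=.
- by rewrite nonempty_over_rev all_rev.
- by rewrite nonempty_over_rev IH.
- by rewrite IHp IHq.
- rewrite nonempty_over_rev size_rev; split=> -[Dw [i [hi Hi]]]; split=> //;
    exists (size w - i); (split; first lia).
    by move: Hi; rewrite IH rev_drop.
  by rewrite IH -take_rev.
- rewrite nonempty_over_rev size_rev; split=> -[Dw [i [hi Hi]]]; split=> //;
    exists (size w - i); (split; first lia).
    by move: Hi; rewrite IH rev_take.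
  by rewrite IH -drop_rev.
Qed.

Definition Bappend a f : BEform T := BEmirror (Bprepend a (BEmirror f)).

Lemma Bappend_denotes a f M :
  denotes f M -> denotes (Bappend a f) (fun w => exists v, M v /\ w = v ++ [:: a]).
Proof.
move=> fM w; rewrite Lact_BEmirror Lact_Bprepend; split=> -[v [fv wE]].
  exists (rev v); split; first by apply/fM; rewrite -Lact_BEmirror.
  by rewrite -(revK w) wE rev_cons cats1.
exists (rev v); split; first by rewrite Lact_BEmirror revK; apply/fM.
by rewrite wE rev_cat.
Qed.

Lemma Bsuffix_cons_denotes a g M :
  denotes g (fun w => exists v, M v /\ w = a :: v) ->
  denotes (Bsuffix g) (fun w => exists u v, M v /\ w = u ++ a :: v).
Proof.
move=> gM; apply: denotes_ext (Bsuffix_denotes gM) _ => w.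
split=> [[u [_ [[v [Mv ->]] ->]]]|[u [v [Mv ->]]]]; first by exists u, v.
by exists u, (a :: v); split=> //; exists v.
Qed.

Lemma Bprefix_snoc_denotes a g M :
  denotes g (fun w => exists v, M v /\ w = v ++ [:: a]) ->
  denotes (Bprefix g) (fun w => exists v u, M v /\ w = v ++ a :: u).
Proof.
move=> gM; apply: denotes_ext (Bprefix_denotes gM) _ => w.
split=> [[_ [u [[v [Mv ->]] ->]]]|[v [u [Mv ->]]]]; first by exists v, u; rewrite -catA.
by exists (v ++ [:: a]), u; rewrite -catA; split=> //; exists v.
Qed.

Definition Bprepend_opt a f : BEform T := BOr (Bprepend a f) (Bsingleton a).

Lemma Bprepend_opt_denotes a f M : denotes f M ->
  denotes (Bprepend_opt a f) (fun w => exists v, (M v \/ v = [::]) /\ w = a :: v).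
Proof.
move=> fM; apply: denotes_ext (BOr_denotes (Bprepend_denotes a fM) (Bsingleton_denotes a)) _.
move=> w; split=> [[[v [Mv ->]]|->]|[v [[Mv|->] ->]]].
- by exists v; split=> //; left.
- by exists [::]; split=> //; right.
- by left; exists v.
- by right.
Qed.

Definition Bappend_opt a f : BEform T := BOr (Bappend a f) (Bsingleton a).

Lemma Bappend_opt_denotes a f M : denotes f M ->
  denotes (Bappend_opt a f) (fun w => exists v, (M v \/ v = [::]) /\ w = v ++ [:: a]).
Proof.
move=> fM; apply: denotes_ext (BOr_denotes (Bappend_denotes a fM) (Bsingleton_denotes a)) _.
move=> w; split=> [[[v [Mv ->]]|->]|[v [[Mv|->] ->]]].
- by exists v; split=> //; left.
- by exists [::]; split=> //; right.
- by left; exists v.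
- by right.
Qed.
End Semantics.

Theorem lemma4p3 (Sigma : finType) (b : Sigma) (L : seq Sigma -> Prop)
  (psi : BEform Sigma)
  (HL : forall w, L w -> nonempty_over (fun x => x != b) w)
  (Hpsi_over : atoms_in (fun x => x != b) psi)
  (Hpsi : forall w, Lact (fun x => x != b) psi w <-> L w) :
  (exists phi, defines phi (fun w => exists v, L v /\ w = b :: v)) /\
  (exists phi, defines phi (fun w => exists u v, L v /\ w = u ++ b :: v)) /\
  (exists phi, defines phi (fun w => exists u v, (L v \/ v = [::]) /\ w = u ++ b :: v)) /\
  (exists phi, defines phi (fun w => exists v, L v /\ w = v ++ [:: b])) /\
  (exists phi, defines phi (fun w => exists v u, L v /\ w = v ++ b :: u)) /\
  (exists phi, defines phi (fun w => exists v u, (L v \/ v = [::]) /\ w = v ++ b :: u)) /\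
  (exists phi, defines phi (fun w => exists v, L v /\ w = b :: v ++ [:: b])).
Proof.
have hL := BAnd_relativize_denotes (Bavoid_denotes b) HL Hpsi.
have hbL := Bprepend_denotes b hL; have hLb := Bappend_denotes b hL.
do ![split]; eexists.
- exact: hbL.
- exact: Bsuffix_cons_denotes hbL.
- exact: Bsuffix_cons_denotes (Bprepend_opt_denotes b hL).
- exact: hLb.
- exact: Bprefix_snoc_denotes hLb.
- exact: Bprefix_snoc_denotes (Bappend_opt_denotes b hL).
- apply: denotes_ext (Bprepend_denotes b hLb) _ => w.
  split=> [[_ [[v [Lv ->]] ->]]|[v [Lv ->]]]; first by exists v.
  by exists (v ++ [:: b]); split=> //; exists v.
Qed.
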